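(* Let $G$ be a finite connected graph in which no edge joins two vertices that both have degree at least $3$, and let $K>0$. Then every stable fixed point $\theta$ of the Kuramoto model on $G$ (as in the context) satisfies $\Delta_{ij}\in[-\pi/2,\pi/2]$ for every edge $\langle ij\rangle$ of $G$.
   Context: The Kuramoto model on $G$ with vertices $1,\dots,n$ is $\dot\theta_i=-K\sum_{j\sim i}\sin(\theta_i-\theta_j)$, where $j\sim i$ means $j$ is adjacent to $i$. A fixed point is $\theta\in\mathbb{R}^n$ with $\sum_{j\sim i}\sin(\theta_i-\theta_j)=0$ for all $i$. For adjacent $i,j$, $\Delta_{ij}$ is $\theta_i-\theta_j$ reduced modulo $2\pi$ into $(-\pi,\pi]$. The stability matrix $M$ has entries $M_{ij}=K\cos(\theta_i-\theta_j)$ if $i\sim j$, $M_{ii}=-\sum_{k\sim i}K\cos(\theta_i-\theta_k)$, and $0$ otherwise; a fixed point is stable if $M$ is negative semidefinite. *)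

From HB Require Import structures.
From mathcomp Require Import all_boot all_order all_algebra.
From mathcomp Require Import all_classical all_reals all_analysis.
Set Implicit Arguments. Unset Strict Implicit. Unset Printing Implicit Defensive.
Import Order.TTheory GRing.Theory Num.Theory.
Local Open Scope ring_scope.

Definition simple_graph (n : nat) (adj : rel 'I_n) : Prop :=
  symmetric adj /\ irreflexive adj.

Definition connected_graph (n : nat) (adj : rel 'I_n) : Prop :=
  forall i j : 'I_n, connect adj i j.

Definition degree (n : nat) (adj : rel 'I_n) (i : 'I_n) : nat :=
  #|[set j | adj i j]|.

Definition kuramoto_fixed_point (R : realType) (n : nat) (adj : rel 'I_n)
  (theta : 'I_n -> R) : Prop :=
  forall i : 'I_n, \sum_(j | adj i j) sin (theta i - theta j) = 0.

Definition stability_matrix (R : realType) (n : nat) (adj : rel 'I_n) (K : R)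
  (theta : 'I_n -> R) : 'M[R]_n :=
  \matrix_(i, j)
    (if i == j then - \sum_(k | adj i k) K * cos (theta i - theta k)
     else if adj i j then K * cos (theta i - theta j) else 0).

Definition neg_semidef (R : realType) (n : nat) (M : 'M[R]_n) : Prop :=
  forall x : 'cV[R]_n, (x^T *m M *m x) 0 0 <= 0.

Definition kuramoto_stable (R : realType) (n : nat) (adj : rel 'I_n) (K : R)
  (theta : 'I_n -> R) : Prop :=
  kuramoto_fixed_point adj theta /\ neg_semidef (stability_matrix adj K theta).

(* Reduction of x modulo 2 pi into (-pi, pi]. *)
Definition wrap_angle (R : realType) (x : R) : R :=
  x - 2 * pi * (Num.ceil ((x - pi) / (2 * pi)))%:~R.

Definition Delta (R : realType) (n : nat) (theta : 'I_n -> R) (i j : 'I_n) : R :=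
  wrap_angle (theta i - theta j).

From HB Require Import structures.
From mathcomp Require Import all_boot all_order all_algebra.
From mathcomp Require Import all_classical all_reals all_analysis.
From mathcomp Require Import ring lra.
Set Implicit Arguments. Unset Strict Implicit. Unset Printing Implicit Defensive.
Import Order.TTheory GRing.Theory Num.Theory.
Local Open Scope ring_scope.

(* Every edge has an endpoint i of degree at most 2; it suffices to show
   cos (theta_i - theta_j) >= 0 there, since the representative of an angle
   in (-pi, pi] with nonnegative cosine lies in [-pi/2, pi/2].  Suppose
   cos (theta_i - theta_j) < 0.  The fixed-point equation at i says that the
   sines of the (at most two) angles at i cancel, so their cosines are equal
   up to sign, and the sum of the cosines at i is <= 0, i.e. M_ii >= 0.  But
   a negative semidefinite matrix with M_ii >= 0 has M_ij + M_ji = 0, whereas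
   here M_ij = M_ji = K cos (theta_i - theta_j) < 0. *)

Lemma quadratic_nonpos_linear_coef0 (R : realFieldType) (a b c : R) :
  0 <= c -> (forall t, a * t ^+ 2 + b * t + c <= 0) -> b = 0.
Proof.
move=> c_ge0 q.
have a_lt1 : a < 1 by have := q 1; have := q (-1); nra.
set t := b / (1 - a).
have bt : b = t * (1 - a) by rewrite divfK // subr_eq0 gt_eqF.
(* with this choice of t the quadratic equals t ^+ 2 + c *)
have t0 : t = 0 by have := q t; nra.
by rewrite bt t0 mul0r.
Qed.

Lemma bilin_form_delta (R : comRingType) (n : nat) (M : 'M[R]_n) (i j : 'I_n) :
  let e k : 'cV[R]_n := delta_mx k 0 in (e i)^T *m M *m e j = (M i j)%:M.
Proof. by rewrite /= trmx_delta -rowE -colE [LHS]mx11_scalar !mxE. Qed.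

Lemma quad_form_delta (R : comRingType) (n : nat) (M : 'M[R]_n) (i j : 'I_n)
    (t : R) :
  let x : 'cV_n := delta_mx i 0 + t *: delta_mx j 0 in
  (x^T *m M *m x) 0 0 = M j j * t ^+ 2 + (M i j + M j i) * t + M i i.
Proof.
rewrite /= [(_ + _)^T]raddfD /= [(t *: _)^T]linearZ /=.
rewrite !(mulmxDl, mulmxDr) -!scalemxAl -!scalemxAr !bilin_form_delta !mxE /=.
ring.
Qed.

Lemma neg_semidef_offdiag (R : realType) (n : nat) (M : 'M[R]_n) (i j : 'I_n) :
  neg_semidef M -> 0 <= M i i -> M i j + M j i = 0.
Proof.
move=> nsd Mii_ge0; apply: (quadratic_nonpos_linear_coef0 (a := M j j) Mii_ge0) => t.
by rewrite -quad_form_delta; apply: nsd.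
Qed.

Lemma periodicz (U V : zmodType) (f : U -> V) (T : U) :
  periodic f T -> forall (k : int) (a : U), f (a + T *~ k) = f a.
Proof.
move=> fT [m|m] a; first exact: periodicn.
by rewrite NegzE mulrNz -(periodicn fT m.+1 (a - _)) subrK.
Qed.

Lemma cos_wrap_angle (R : realType) (x : R) : cos (wrap_angle x) = cos x.
Proof.
by rewrite /wrap_angle mulrzr mulr_natl -mulrNz periodicz //; apply: cosD2pi.
Qed.

Lemma wrap_angle_itv (R : realType) (x : R) : - pi < wrap_angle x <= pi.
Proof.
rewrite /wrap_angle; set c := Num.ceil _.
have := ceil_itv ((x - pi) / (2 * pi)); rewrite -/c => /andP[c_lo c_hi].
have pi_gt0 := @pi_gt0 R.
have two_pi_gt0 : 0 < 2 * pi :> R by rewrite mulr_gt0.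
rewrite ler_pdivrMr // in c_hi; rewrite ltr_pdivlMr // intrB in c_lo.
by apply/andP; split; nra.
Qed.

Lemma le_pihalf_cos_ge0 (R : realType) (y : R) :
  0 <= y <= pi -> 0 <= cos y -> y <= pi / 2.
Proof.
move=> y_itv cos_ge0; rewrite leNgt; apply/negP => y_gt.
have pi_gt0 := @pi_gt0 R.
have : cos y < cos (pi / 2) by rewrite ltr_cos // in_itv /=; apply/andP; lra.
by rewrite cos_pihalf; lra.
Qed.

Lemma wrap_angle_pihalf (R : realType) (x : R) :
  0 <= cos x -> - (pi / 2) <= wrap_angle x <= pi / 2.
Proof.
rewrite -cos_wrap_angle; have /andP[lo hi] := wrap_angle_itv x.
move: (wrap_angle x) lo hi => y lo hi cos_ge0; have pi_gt0 := @pi_gt0 R.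
have [y_ge0|y_lt0] := lerP 0 y.
  have : y <= pi / 2 by apply: le_pihalf_cos_ge0; rewrite ?y_ge0.
  lra.
have : - y <= pi / 2.
  by apply: le_pihalf_cos_ge0; [apply/andP; split; lra | rewrite cosN].
lra.
Qed.

Lemma cos_sum_le0 (R : realType) (x y : R) :
  sin x + sin y = 0 -> cos x < 0 -> cos x + cos y <= 0.
Proof.
move=> sin_sum cos_x_lt0.
have : cos y ^+ 2 = cos x ^+ 2.
  by rewrite !cos2sin2 (_ : sin y = - sin x) ?sqrrN //; lra.
nra.
Qed.

Lemma big_card_le2 (T : finType) (V : nmodType) (P : pred T) (j : T) :
  P j -> (#|P| <= 2)%N ->
  exists (k : T) (b : bool), forall F : T -> V,
    \sum_(l | P l) F l = F j + F k *+ b.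
Proof.
move=> Pj P_le2.
have P'_le1 : (#|[predD1 P & j]| <= 1)%N by move: P_le2; rewrite (cardD1 j) [j \in P]Pj.
case: (pickP [predD1 P & j]) => [k P'k | P'0].
  exists k, true => F; rewrite (bigD1 j) //=; congr (_ + _).
  rewrite (eq_bigl (pred1 k)) ?big_pred1_eq // => l.
  by rewrite andbC -[RHS](card_le1P P'_le1 k P'k).
exists j, false => F; rewrite (bigD1 j) //= big_pred0 // => l.
by rewrite andbC; apply: P'0.
Qed.

Lemma stable_cos_ge0_at_low_degree (R : realType) (n : nat) (adj : rel 'I_n)
    (K : R) (theta : 'I_n -> R) (i j : 'I_n) :
  simple_graph adj -> 0 < K -> kuramoto_stable adj K theta ->
  adj i j -> (degree adj i < 3)%N -> 0 <= cos (theta i - theta j).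
Proof.
move=> [sym irr] K_gt0 [fixed nsd] aij deg_i.
have ij : i != j by apply: contraTneq aij => ->; rewrite irr.
rewrite leNgt; apply/negP => cos_lt0.
have deg_i' : (#|adj i| <= 2)%N by rewrite -cardsE.
have [k [b nbr]] := big_card_le2 R aij deg_i'.
have cos_sum_nonpos : \sum_(l | adj i l) cos (theta i - theta l) <= 0.
  have := fixed i; rewrite !nbr; case: b {nbr} => /= sin_sum.
    exact: cos_sum_le0.
  by rewrite addr0; apply: ltW.
set M := stability_matrix adj K theta.
have Mii_ge0 : 0 <= M i i.
  by rewrite mxE eqxx -mulr_sumr oppr_ge0 pmulr_rle0.
have := neg_semidef_offdiag j nsd Mii_ge0.
rewrite !mxE (negbTE ij) eq_sym (negbTE ij) aij sym aij -[theta j - _]opprB cosN.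
by move/eqP; rewrite -mulr2n mulrn_eq0 /= mulf_eq0 (gt_eqF K_gt0) lt_eqF.
Qed.

Theorem lemma2 (R : realType) (n : nat) (adj : rel 'I_n) (K : R) (theta : 'I_n -> R) :
  simple_graph adj ->
  connected_graph adj ->
  (forall i j : 'I_n, adj i j -> ~ ((3 <= degree adj i)%N /\ (3 <= degree adj j)%N)) ->
  0 < K ->
  kuramoto_stable adj K theta ->
  forall i j : 'I_n, adj i j ->
    - (pi / 2) <= Delta theta i j <= pi / 2.
Proof.
move=> simple _ no_high_edge K_gt0 stable i j aij.
rewrite /Delta; apply: wrap_angle_pihalf.
have [deg_i|deg_i] := ltnP (degree adj i) 3.
  exact: stable_cos_ge0_at_low_degree simple K_gt0 stable aij deg_i.
have [deg_j|deg_j] := ltnP (degree adj j) 3; last by case: (no_high_edge i j aij).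
have aji : adj j i by case: simple => sym _; rewrite sym.
by rewrite -cosN opprB; apply: stable_cos_ge0_at_low_degree simple K_gt0 stable aji deg_j.
Qed.
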